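(* Let $X$ be a complex Banach space, $\mathcal{F}$ and $\mathcal{G}$ algebras with unit, $\eta:\mathcal{G}\to\mathcal{F}$ a unital algebra homomorphism, and $\Phi:\mathcal{F}\to\mathcal{C}(X)$, $\Psi:\mathcal{G}\to\mathcal{C}(X)$ proto-calculi. Let $\mathcal{E}$ be an algebraic core for $\Psi$ such that $\Phi(\eta(e))=\Psi(e)$ for all $e\in\mathcal{E}$. Then the following are equivalent: (i) $\Phi\circ\eta=\Psi$; (ii) $\eta(\mathcal{G})$ is a $\Phi$-regular subalgebra of $\mathcal{F}$; (iii) $\eta(\mathcal{E})$ is an algebraic core for the restriction of $\Phi$ to $\eta(\mathcal{G})$. Moreover, (i)–(iii) hold if $\Phi$ is a calculus and $\mathcal{F}$ is commutative.
   Context: Algebras need not be commutative. $\mathcal{L}(X)$, $\mathcal{C}(X)$: bounded, resp. closed linear operators on $X$; operator inclusions are graph inclusions, sums/products have natural domains, ''$Tx=y$'' means $x\in\mathrm{dom}(T)$, $Tx=y$. For a unital algebra $\mathcal{H}$, a proto-calculus is a map $\Phi:\mathcal{H}\to\mathcal{C}(X)$ with (FC1) $\Phi(\mathbf{1})=I$; (FC2) $\lambda\Phi(f)\subseteq\Phi(\lambda f)$, $\Phi(f)+\Phi(g)\subseteq\Phi(f+g)$; (FC3) $\Phi(f)\Phi(g)\subseteq\Phi(fg)$ with $\mathrm{dom}(\Phi(f)\Phi(g))=\mathrm{dom}(\Phi(g))\cap\mathrm{dom}(\Phi(fg))$. $\mathrm{bdd}(\mathcal{H},\Phi)=\{f:\Phi(f)\in\mathcal{L}(X)\}$;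 for $\mathcal{E}\subseteq\mathcal{H}$, $[f]_{\mathcal{E}}=\{e\in\mathcal{E}:ef\in\mathcal{E}\}$; $\mathrm{reg}(f,\Phi)=[f]_{\mathrm{bdd}(\mathcal{H},\Phi)}$. A subset $\mathcal{E}\subseteq\mathrm{bdd}(\mathcal{H},\Phi)$ is an algebraic core for $\Phi$ if for every $f\in\mathcal{H}$ and $x,y\in X$: $\Phi(f)x=y\iff\Phi(ef)x=\Phi(e)y$ for all $e\in[f]_{\mathcal{E}}$. A calculus is a proto-calculus for which $\mathrm{bdd}(\mathcal{H},\Phi)$ is an algebraic core. A unital subalgebra $\mathcal{H}_0$ of $\mathcal{H}$ is $\Phi$-regular if the restriction $\Phi|_{\mathcal{H}_0}$ is a calculus on $\mathcal{H}_0$. *)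

From HB Require Import structures.
From mathcomp Require Import all_boot all_order all_algebra.
From mathcomp Require Export complex.
From mathcomp Require Import all_classical all_reals all_analysis.
Import GRing.Theory Num.Theory.
Local Open Scope ring_scope.
Local Open Scope classical_set_scope.

(* Linear operators on X are represented by their graphs, subsets of X * X.
   Operator inclusion = graph inclusion. *)
Section Ops.
Variables (K : numDomainType) (X : normedModType K).

Definition op := set (X * X).

Definition linear_op (T : op) : Prop :=
  [/\ T (0, 0),
      (forall x y x' y', T (x, y) -> T (x', y') -> T (x + x', y + y')),
      (forall (a : K) x y, T (x, y) -> T (a *: x, a *: y)) &
      (forall x y z, T (x, y) -> T (x, z) -> y = z)].

Definition closed_op (T : op) : Prop := linear_op T /\ closed T.

Definition bounded_op (T : op) : Prop :=
  linear_op T /\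
  exists f : X -> X, continuous f /\ forall x y, T (x, y) <-> y = f x.

Definition dom (T : op) : set X := [set x | exists y, T (x, y)].

Definition id_op : op := [set p | p.2 = p.1].

Definition scale_op (a : K) (T : op) : op :=
  [set p | exists y, T (p.1, y) /\ p.2 = a *: y].

Definition add_op (T S : op) : op :=
  [set p | exists y z, [/\ T (p.1, y), S (p.1, z) & p.2 = y + z]].

Definition mul_op (T S : op) : op :=
  [set p | exists y, S (p.1, y) /\ T (y, p.2)].
End Ops.
Arguments op {K} X.
Arguments id_op {K} X.
Arguments dom {K X}.
Arguments scale_op {K X}.
Arguments add_op {K X}.
Arguments mul_op {K X}.
Arguments linear_op {K X}.
Arguments closed_op {K X}.
Arguments bounded_op {K X}.

Section Calculus.
Variables (K : numDomainType) (X : normedModType K) (H : algType K).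
Implicit Types (Phi : H -> op X) (S E : set H).

Definition unital_subalg S : Prop :=
  [/\ S 1,
      (forall f g, S f -> S g -> S (f + g)),
      (forall (a : K) f, S f -> S (a *: f)) &
      (forall f g, S f -> S g -> S (f * g))].

Definition proto_calculus_on S Phi : Prop :=
  [/\ (forall f, S f -> closed_op (Phi f)),
      Phi 1 = id_op X,
      (forall (a : K) f, S f -> scale_op a (Phi f) `<=` Phi (a *: f)),
      (forall f g, S f -> S g -> add_op (Phi f) (Phi g) `<=` Phi (f + g)) &
      (forall f g, S f -> S g ->
         mul_op (Phi f) (Phi g) `<=` Phi (f * g) /\
         dom (mul_op (Phi f) (Phi g)) = dom (Phi g) `&` dom (Phi (f * g)))].

Definition proto_calculus Phi : Prop := proto_calculus_on setT Phi.

Definition bdd_on S Phi : set H := [set f | S f /\ bounded_op (Phi f)].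
Definition bdd Phi : set H := bdd_on setT Phi.

Definition reg_set E (f : H) : set H := [set e | E e /\ E (e * f)].

Definition alg_core_on S Phi E : Prop :=
  E `<=` bdd_on S Phi /\
  forall f, S f -> forall x y : X,
    Phi f (x, y) <->
    (forall e, reg_set E f e ->
       exists z, Phi e (y, z) /\ Phi (e * f) (x, z)).

Definition alg_core Phi E : Prop := alg_core_on setT Phi E.

Definition calculus_on S Phi : Prop :=
  proto_calculus_on S Phi /\ alg_core_on S Phi (bdd_on S Phi).

Definition calculus Phi : Prop := calculus_on setT Phi.

Definition regular_subalg Phi S : Prop :=
  unital_subalg S /\ calculus_on S Phi.
End Calculus.
Arguments unital_subalg {K H}.
Arguments proto_calculus_on {K X H}.
Arguments proto_calculus {K X H}.
Arguments bdd_on {K X H}.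
Arguments bdd {K X H}.
Arguments reg_set {K H}.
Arguments alg_core_on {K X H}.
Arguments alg_core {K X H}.
Arguments calculus_on {K X H}.
Arguments calculus {K X H}.
Arguments regular_subalg {K X H}.

From HB Require Import structures.
From mathcomp Require Import all_boot all_order all_algebra.
From mathcomp Require Import complex.
From mathcomp Require Import all_classical all_reals all_analysis.
Import GRing.Theory Num.Theory.
Local Open Scope ring_scope.
Local Open Scope classical_set_scope.

(** Since [E] is a core for [Psi] on which [Phi \o eta] agrees with [Psi],
   the core condition for [Psi] already gives [Phi (eta g) <= Psi g]; (i) is
   the reverse inclusion.  Under (i), [eta @` E] inherits the core property,
   and a core on the range makes the range [Phi]-regular.  Regularity gives
   back (i): a point of the graph of [Psi g] is tested against the bounded
   elements of the range, and two candidate values coincide because both lie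
   in the graph of the single-valued [Psi (k * g)].  When [Phi] is a calculus
   and [F] is commutative, the bounded [Phi k] commute with the [Phi (eta e)],
   [e \in E]; this makes [Phi (eta e)] kill the difference of the two
   candidate values, and the core [E] tested at the point [0] shows that this
   difference lies in the graph of [Psi g] over [0], hence vanishes. *)

Section Operators.
Context {K : numDomainType} {X : normedModType K}.
Implicit Types (T : op X) (x y z : X).

Lemma linear_op_functional {T x y z} :
  linear_op T -> T (x, y) -> T (x, z) -> y = z.
Proof. by case=> _ _ _; apply. Qed.

Lemma linear_op_subr {T x y x' y'} :
  linear_op T -> T (x, y) -> T (x', y') -> T (x - x', y - y').
Proof.
case=> _ addT scaleT _ Txy Tx'y'.
by have := addT _ _ _ _ Txy (scaleT (-1) _ _ Tx'y'); rewrite !scaleN1r.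
Qed.

Lemma linear_op_graph0 {T y} : linear_op T -> T (0, y) -> y = 0.
Proof.
move=> linT T0y; have [T00 _ _ _] := linT.
exact: linear_op_functional linT T0y T00.
Qed.

Lemma bounded_op_linear {T} : bounded_op T -> linear_op T.
Proof. by case. Qed.

Lemma bounded_op_total {T} x : bounded_op T -> exists y, T (x, y).
Proof. by case=> _ [f [_ Tf]]; exists (f x); apply/Tf. Qed.

End Operators.

Section ProtoCalculus.
Context {K : numDomainType} {X : normedModType K} {H : algType K}.
Implicit Types (Phi : H -> op X) (S E : set H) (e f g : H) (x y z : X).

Lemma proto_calculus_on_sub {S S' Phi} :
  S' `<=` S -> proto_calculus_on S Phi -> proto_calculus_on S' Phi.
Proof.
move=> sS'S [clPhi Phi1 scalePhi addPhi mulPhi]; split => //.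
- by move=> f /sS'S; apply: clPhi.
- by move=> a f /sS'S; apply: scalePhi.
- by move=> f g /sS'S Sf /sS'S; apply: addPhi.
- by move=> f g /sS'S Sf /sS'S; apply: mulPhi.
Qed.

Lemma proto_calculus_on_linear {S Phi f} :
  proto_calculus_on S Phi -> S f -> linear_op (Phi f).
Proof. by case=> clPhi _ _ _ _ /clPhi []. Qed.

Lemma proto_calculus_on_mul {S Phi e f x y z} :
  proto_calculus_on S Phi -> S e -> S f ->
  Phi f (x, y) -> Phi e (y, z) -> Phi (e * f) (x, z).
Proof.
case=> _ _ _ _ mulPhi Se Sf Phify Phiez.
by have [+ _] := mulPhi e f Se Sf; apply; exists y.
Qed.

Lemma proto_calculus_on_bounded_mul {S Phi e f x y} :
  proto_calculus_on S Phi -> S e -> S f -> bounded_op (Phi e) ->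
  Phi f (x, y) -> exists z, Phi e (y, z) /\ Phi (e * f) (x, z).
Proof.
move=> PhiS Se Sf bdde Phify; have [z Phiez] := bounded_op_total y bdde.
by exists z; split=> //; apply: proto_calculus_on_mul PhiS Se Sf Phify Phiez.
Qed.

Lemma proto_calculus_mul_eq {Phi f1 f2 g1 g2 x u v u' v'} :
  proto_calculus Phi -> f1 * f2 = g1 * g2 ->
  Phi f2 (x, u) -> Phi f1 (u, v) -> Phi g2 (x, u') -> Phi g1 (u', v') -> v = v'.
Proof.
move=> PhiP f12E Phif2 Phif1 Phig2 Phig1.
have := proto_calculus_on_mul PhiP I I Phif2 Phif1; rewrite f12E => Phiv.
have Phiv' := proto_calculus_on_mul PhiP I I Phig2 Phig1.
exact: linear_op_functional (proto_calculus_on_linear PhiP I) Phiv Phiv'.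
Qed.

Lemma alg_core_on_graph0 {S Phi E g w} :
  alg_core_on S Phi E -> S g ->
  (forall e, reg_set E g e -> Phi e (w, 0)) -> Phi g (0, w).
Proof.
case=> sEbdd coreE Sg Phie; apply/(coreE g Sg) => e [Ee Eeg].
exists 0; split; first exact: Phie.
by have [_ /bounded_op_linear []] := sEbdd _ Eeg.
Qed.

Lemma calculus_on_of_alg_core {S Phi E} :
  proto_calculus_on S Phi -> alg_core_on S Phi E -> calculus_on S Phi.
Proof.
move=> PhiS [sEbdd coreE]; split=> //; split=> // f Sf x y; split.
  move=> Phify e [[Se bdde] [Sef _]].
  exact: proto_calculus_on_bounded_mul PhiS Se Sf bdde Phify.
move=> Phie; apply/(coreE f Sf) => e [Ee Eef].
by apply: Phie; split; apply: sEbdd.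
Qed.

End ProtoCalculus.

Lemma unital_subalg_range (K : numDomainType) (G F : algType K)
    (eta : {lrmorphism G -> F}) :
  unital_subalg (range eta).
Proof.
split.
- by exists 1; rewrite ?rmorph1.
- by move=> _ _ [f _ <-] [g _ <-]; exists (f + g); rewrite ?rmorphD.
- by move=> a _ [f _ <-]; exists (a *: f); rewrite ?linearZ.
- by move=> _ _ [f _ <-] [g _ <-]; exists (f * g); rewrite ?rmorphM.
Qed.

Lemma regular_subalg_range_of_alg_core (K : numDomainType) (X : normedModType K)
    (G F : algType K) (eta : {lrmorphism G -> F}) (Phi : F -> op X) E :
  proto_calculus Phi -> alg_core_on (range eta) Phi E ->
  regular_subalg Phi (range eta).
Proof.
move=> PhiP coreE; split; first exact: unital_subalg_range.
exact: calculus_on_of_alg_core (proto_calculus_on_sub (subsetT _) PhiP) coreE.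
Qed.

Section Transfer.
Context {K : numDomainType} {X : normedModType K}
  {F G : algType K} {eta : {lrmorphism G -> F}}
  {Phi : F -> op X} {Psi : G -> op X}
  (hPhi : proto_calculus Phi) (hPsi : proto_calculus Psi)
  {E : set G} (hE : alg_core Psi E)
  (hagree : forall e, E e -> Phi (eta e) = Psi e).

Lemma bounded_Phi_eta_core {e} : E e -> bounded_op (Phi (eta e)).
Proof. by move=> Ee; rewrite hagree //; have [/(_ e Ee) []] := hE. Qed.

Lemma Phi_eta_sub_Psi g : Phi (eta g) `<=` Psi g.
Proof.
case=> x y Phixy; apply/(hE.2 g I x y) => e [Ee Eeg].
have [z [Phiez Phiegz]] :=
  proto_calculus_on_bounded_mul hPhi I I (bounded_Phi_eta_core Ee) Phixy.
by exists z; rewrite -!hagree // rmorphM.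
Qed.

Lemma Phi_eta_eq_Psi : (forall g, Psi g `<=` Phi (eta g)) ->
  forall g, Phi (eta g) = Psi g.
Proof. by move=> PsiPhi g; apply/seteqP; split; [apply: Phi_eta_sub_Psi|]. Qed.

Lemma alg_core_range_of_Phi_eta : (forall g, Phi (eta g) = Psi g) ->
  alg_core_on (range eta) Phi (eta @` E).
Proof.
move=> PhiPsi; split.
  move=> _ [e Ee <-]; split; first by exists e.
  exact: bounded_Phi_eta_core.
move=> _ [g _ <-] x y; split.
  move=> Phixy _ [[e Ee <-] _].
  exact: proto_calculus_on_bounded_mul hPhi I I (bounded_Phi_eta_core Ee) Phixy.
move=> Phie; rewrite PhiPsi; apply/(hE.2 g I x y) => e [Ee Eeg].
rewrite -!PhiPsi rmorphM; apply: Phie; split; first by exists e.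
by exists (e * g); rewrite ?rmorphM.
Qed.

Lemma Psi_sub_Phi_eta_of_regular : regular_subalg Phi (range eta) ->
  forall g, Psi g `<=` Phi (eta g).
Proof.
move=> [_ [_ [_ coreS]]] g [x y] Psixy.
apply/(coreS (eta g) (ex_intro2 _ _ g I erefl) x y).
move=> _ [[[k _ <-] bddk] [_ bddkg]].
have [z Phikz] := bounded_op_total y bddk.
have [z' Phikgz'] := bounded_op_total x bddkg.
exists z; split=> //; suff -> : z = z' by [].
have Psikgz := proto_calculus_on_mul hPsi I I Psixy (Phi_eta_sub_Psi _ _ Phikz).
have Psikgz' : Psi (k * g) (x, z') by apply: Phi_eta_sub_Psi; rewrite rmorphM.
exact: linear_op_functional (proto_calculus_on_linear hPsi I) Psikgz Psikgz'.
Qed.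

Lemma Psi_sub_Phi_eta_of_calculus : calculus Phi ->
  (forall f g : F, f * g = g * f) -> forall g, Psi g `<=` Phi (eta g).
Proof.
move=> [_ [_ coreB]] mulFC g [x y] Psixy.
apply/(coreB (eta g) I x y) => k [[_ bddk] [_ bddkg]].
have [a Phikga] := bounded_op_total x bddkg.
have [b Phikb] := bounded_op_total y bddk.
exists b; split=> //; suff /eqP : a - b = 0 by rewrite subr_eq0 => /eqP <-.
apply: (linear_op_graph0 (T := Psi g)).
  exact: proto_calculus_on_linear hPsi I.
apply: alg_core_on_graph0 hE I _ => e [Ee Eeg].
have [z [Psiez Psiegz]] :=
  proto_calculus_on_bounded_mul hPsi I I (hE.1 _ Ee).2 Psixy.
rewrite -(hagree _ Ee) in Psiez; rewrite -(hagree _ Eeg) rmorphM in Psiegz.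
(* [eta e] commutes with [k], so [Phi (eta e)] maps both [a] and [b] to [r]. *)
have [r Phikr] := bounded_op_total z bddk.
have [p Phiep] := bounded_op_total a (bounded_Phi_eta_core Ee).
have [q Phieq] := bounded_op_total b (bounded_Phi_eta_core Ee).
have pr : p = r.
  apply: proto_calculus_mul_eq hPhi _ Phikga Phiep Psiegz Phikr.
  by rewrite mulrA [eta e * k]mulFC -mulrA.
have qr : q = r.
  exact: proto_calculus_mul_eq hPhi (mulFC _ _) Phikb Phieq Psiez Phikr.
rewrite -hagree //.
have := linear_op_subr (proto_calculus_on_linear hPhi I) Phiep Phieq.
by rewrite pr qr subrr.
Qed.

End Transfer.

Theorem theorem5p8 (R : realType) (X : completeNormedModType R[i])
  (F G : algType R[i]) (eta : {lrmorphism G -> F})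
  (Phi : F -> op X) (Psi : G -> op X)
  (hPhi : proto_calculus Phi) (hPsi : proto_calculus Psi)
  (E : set G) (hE : alg_core Psi E)
  (hagree : forall e, E e -> Phi (eta e) = Psi e) :
  ((forall g, Phi (eta g) = Psi g) <-> regular_subalg Phi (range eta)) /\
  (regular_subalg Phi (range eta) <-> alg_core_on (range eta) Phi (eta @` E)) /\
  (calculus Phi -> (forall f g : F, f * g = g * f) ->
     forall g, Phi (eta g) = Psi g).
Proof.
have iii_ii := @regular_subalg_range_of_alg_core _ _ _ _ eta _ (eta @` E) hPhi.
have i_iii := alg_core_range_of_Phi_eta hPhi hE hagree.
have eq_of_sub := Phi_eta_eq_Psi hPhi hE hagree.
have ii_i : regular_subalg Phi (range eta) -> forall g, Phi (eta g) = Psi g.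
  by move/(Psi_sub_Phi_eta_of_regular hPhi hPsi hE hagree)/eq_of_sub.
split; first by split=> [PhiPsi | /ii_i]; [apply/iii_ii/i_iii |].
split; first by split=> [/ii_i PhiPsi | /iii_ii]; [apply: i_iii |].
move=> calcPhi mulFC.
exact/eq_of_sub/(Psi_sub_Phi_eta_of_calculus hPhi hPsi hE hagree).
Qed.
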